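(* For $n \geq 1$ let $P_n(x) = (x^2-x-1)x^n + 1$ and let $C_n$ be the convex hull of the set of roots $q'$ of $P_n$ with $|q'|<1$. Then for every $\varepsilon > 0$ there exists $N$ such that for all $n > N$, \[ \{z \in \mathbb{C} : |z| \leq 1-\varepsilon\} \subset C_n \subset \{z \in \mathbb{C}: |z| \leq 1\}. \] *)

From HB Require Import structures.
From mathcomp Require Import all_boot all_order all_algebra.
From mathcomp Require Import complex.
From mathcomp Require Import reals.
Set Implicit Arguments. Unset Strict Implicit. Unset Printing Implicit Defensive.
Import Order.TTheory GRing.Theory Num.Theory.
Local Open Scope ring_scope.
Local Open Scope complex_scope.

Definition Pn (R : realType) (n : nat) : {poly R[i]} :=
  ('X^2 - 'X - 1) * 'X^n + 1.

Definition small_roots (R : realType) (n : nat) (q : R[i]) : Prop :=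
  root (Pn R n) q /\ `|q| < 1.

Definition convex_hull (R : realType) (S : R[i] -> Prop) (z : R[i]) : Prop :=
  exists (k : nat) (q : 'I_k -> R[i]) (w : 'I_k -> R),
    (forall i, S (q i)) /\ (forall i, 0 <= w i) /\ \sum_(i < k) w i = 1 /\
    z = \sum_(i < k) (w i)%:C * q i.

Definition Cn (R : realType) (n : nat) : R[i] -> Prop :=
  convex_hull (@small_roots R n).

Definition cdisk (R : realType) (r : R) (z : R[i]) : Prop := `|z| <= r%:C.

(* Fix 0 < th < pi, put w = e^(i th) and A = w^2 - w - 1; then |A| > 1.  Choose an
   n-th root z of -1/A with |z| <= 1 and |z - w| = O(1/n).  Since z^n A = -1 we get
   P_n(z) = z^n (z - w)(z + w - 1), which is O(|z^n| / n), while |P_n'(z)| is of order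
   n |z^n|; as every point is within deg p |p/p'| of a root of p, P_n has a root q with
   |q - w| = O(1/n), and q lies in the open unit disk because |q^2 - q - 1| > 1 near w.
   Doing this for finitely many th whose cosines run from 1 - eps/2 to -(1 - eps/2) in
   steps of at most eps/8, and reflecting roots into the upper half-plane, covers the disk
   of radius 1 - eps by quadrilaterals q_k, conj q_k, q_(k+1), conj q_(k+1) whose
   vertices are roots of modulus < 1.  The other inclusion holds because C_n is the hull
   of points of modulus < 1. *)

From HB Require Import structures.
From mathcomp Require Import all_boot all_order all_algebra.
From mathcomp Require Import complex.
From mathcomp Require Import reals.
From mathcomp Require Import ring lra.
From mathcomp Require Import classical_sets topology normedtype sequences derive realfun exp trigo.
Set Implicit Arguments.
Unset Strict Implicit.
Unset Printing Implicit Defensive.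
Import Order.TTheory GRing.Theory Num.Theory Normc numFieldNormedType.Exports.
Local Open Scope ring_scope.
Local Open Scope complex_scope.

Lemma ltr_nat_gt_truncn (R : archiRealDomainType) (x : R) n :
  (Num.truncn x < n)%N -> x < n%:R.
Proof. by move=> lt_n; rewrite (lt_le_trans (truncnS_gt x)) // ler_nat. Qed.

Lemma nat_ivt (R : realDomainType) (u : nat -> R) x K : (0 < K)%N ->
  x <= u 0%N -> u K <= x -> exists2 k, (k < K)%N & u k.+1 <= x <= u k.
Proof.
elim: K => // K IHK _ x_le uK1_le.
have [uK_le | x_lt] := leP (u K) x; last by exists K => //; rewrite uK1_le ltW.
have [K0 | K_gt0] := posnP K; first by subst K; exists 0%N; rewrite // uK1_le x_le.
by have [k k_lt k_bracket] := IHK K_gt0 x_le uK_le; exists k => //; exact: ltnW.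
Qed.

Lemma eventually_finite_choice (T : Type) (P : nat -> nat -> T -> Prop) K :
  (forall j, (j <= K)%N -> exists N, forall n, (N < n)%N -> exists x, P n j x) ->
  exists N, forall n, (N < n)%N -> exists f : nat -> T, forall j, (j <= K)%N -> P n j (f j).
Proof.
elim: K => [|K IHK] ev_P.
  have [N HN] := ev_P 0%N (leqnn 0); exists N => n /HN[x Px].
  by exists (fun=> x) => j; rewrite leqn0 => /eqP ->.
have [N1 HN1] := IHK (fun j le_jK => ev_P j (leqW le_jK)).
have [N2 HN2] := ev_P K.+1 (leqnn _).
exists (maxn N1 N2) => n; rewrite gtn_max => /andP[/HN1[f Pf] /HN2[x Px]].
exists (fun j => if j == K.+1 then x else f j) => j le_jK.
by case: eqP => [-> // | /eqP neq_jK]; apply: Pf; rewrite -ltnS ltn_neqAle neq_jK.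
Qed.

Section RealModulus.
Variable R : rcfType.
Implicit Types x y z : R[i].

Lemma normr_normc z : `|z| = (normc z)%:C.
Proof. by case: z. Qed.

Lemma normc_ge0 z : 0 <= normc z.
Proof. by case: z => a b; exact: sqrtr_ge0. Qed.

Lemma normc_sqr z : normc z ^+ 2 = complex.Re z ^+ 2 + complex.Im z ^+ 2.
Proof. by case: z => a b /=; rewrite sqr_sqrtr // addr_ge0 // sqr_ge0. Qed.

Lemma normcX z n : normc (z ^+ n) = normc z ^+ n.
Proof. by apply: complexI; rewrite rmorphXn /= -!normr_normc normrX. Qed.

Lemma normcR (r : R) : normc r%:C = `|r|.
Proof. by rewrite /= expr0n /= addr0 sqrtr_sqr. Qed.

Lemma normc_nat n : normc (n%:R : R[i]) = n%:R.
Proof. by rewrite -(rmorph_nat (real_complex R)) normcR normr_nat. Qed.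

Lemma normc_eq0 z : (normc z == 0) = (z == 0).
Proof. by rewrite -(inj_eq (@complexI R)) -normr_normc normr_eq0. Qed.

Lemma distcC x y : normc (x - y) = normc (y - x).
Proof. by rewrite -normcN opprB. Qed.

Lemma lerB_distc x y : normc x - normc y <= normc (x - y).
Proof. by have := le_normcD (x - y) y; rewrite subrK; lra. Qed.

Lemma normc_sum (I : Type) (s : seq I) (f : I -> R[i]) :
  normc (\sum_(i <- s) f i) <= \sum_(i <- s) normc (f i).
Proof.
elim: s => [|i s IHs]; first by rewrite !big_nil normc0.
by rewrite !big_cons (le_trans (le_normcD _ _)) // lerD2l.
Qed.

Lemma normc_geRe z : `|complex.Re z| <= normc z.
Proof.
rewrite -(ler_pXn2r (n := 2)) ?nnegrE ?normc_ge0 //.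
by rewrite normc_sqr real_normK ?num_real // lerDl sqr_ge0.
Qed.

Lemma distRe_le_distc x y :
  `|complex.Re x - complex.Re y| <= normc (x - y).
Proof. by case: x y => [a b] [c d]; exact: (normc_geRe ((a - c) +i* (b - d))). Qed.

Lemma abs_Im_le (q z : R[i]) (delta : R) : normc q <= 1 -> normc z <= 1 ->
  `|complex.Re q - complex.Re z| <= delta -> normc z ^+ 2 + 2 * delta <= normc q ^+ 2 ->
  `|complex.Im z| <= `|complex.Im q|.
Proof.
move=> q_le1 z_le1 near_Re gap.
have sum_le : `|complex.Re q + complex.Re z| <= 2.
  rewrite (le_trans (ler_normD _ _)) //.
  by have := le_trans (normc_geRe q) q_le1; have := le_trans (normc_geRe z) z_le1; lra.
have sqr_diff : complex.Re q ^+ 2 - complex.Re z ^+ 2 <= 2 * delta.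
  have -> : complex.Re q ^+ 2 - complex.Re z ^+ 2 =
            (complex.Re q - complex.Re z) * (complex.Re q + complex.Re z) by ring.
  rewrite (le_trans (ler_norm _)) // normrM mulrC.
  by rewrite ler_pM ?normr_ge0.
rewrite -(ler_pXn2r (n := 2)) ?nnegrE ?normr_ge0 // !real_normK ?num_real //.
by move: gap; rewrite !normc_sqr; lra.
Qed.

End RealModulus.

Section RootNearPoint.
Variable R : rcfType.

Lemma exists_normc_sum_le (I : eqType) (s : seq I) (f : I -> R[i]) : s != [::] ->
  exists2 i, i \in s & normc (\sum_(j <- s) f j) <= (size s)%:R * normc (f i).
Proof.
elim: s => [//|i [|j s] IHs] _; first by exists i; rewrite ?mem_head // big_seq1 mul1r.
have [k k_in le_k] := IHs isT.
set m := size (j :: s) in le_k *.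
have -> : (size [:: i, j & s])%:R = m%:R + 1 :> R by exact: mulrSr.
rewrite big_cons.
have le_sum := le_trans (le_normcD (f i) _) (lerD (lexx _) le_k).
have m_ge0 : 0 <= m%:R :> R := ler0n _ _.
case: (leP (normc (f i)) (normc (f k))) => [le_ik | /ltW le_ki].
  by exists k; [rewrite in_cons k_in orbT | nra].
have := ler_wpM2l m_ge0 le_ki.
by exists i; [exact: mem_head | nra].
Qed.

Lemma horner_deriv_prod_XsubC (rs : seq R[i]) z : all (fun r => r != z) rs ->
  (\prod_(r <- rs) ('X - r%:P))^`().[z] =
  (\prod_(r <- rs) ('X - r%:P)).[z] * \sum_(r <- rs) (z - r)^-1.
Proof.
elim: rs => [|r rs IHrs] /=; first by rewrite !big_nil derivC horner0 mulr0.
case/andP=> r_neq_z /IHrs {}IHrs.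
rewrite !big_cons derivM derivXsubC mul1r hornerD !hornerM IHrs hornerXsubC.
have zr_neq0 : z - r != 0 by rewrite subr_eq0 eq_sym.
by field.
Qed.

Lemma exists_root_dist_le (p : {poly R[i]}) z : p^`().[z] != 0 ->
  exists2 r, root p r & normc (z - r) * normc p^`().[z] <= (size p).-1%:R * normc p.[z].
Proof.
move=> dp_neq0.
have [pz0 | pz_neq0] := eqVneq p.[z] 0.
  by exists z; [exact/rootP | rewrite subrr normc0 mul0r mulr_ge0 ?ler0n ?normc_ge0].
have [rs p_eq] := closed_field_poly_normal p.
have lc_neq0 : lead_coef p != 0.
  by rewrite lead_coef_eq0; apply: contra dp_neq0 => /eqP ->; rewrite deriv0 horner0.
have root_p r : r \in rs -> root p r.
  by move=> r_in; rewrite p_eq rootZ // root_prod_XsubC.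
have rs_neq_z : all (fun r => r != z) rs.
  by apply/allP => r /root_p; apply: contraTneq => ->; rewrite rootE.
have dp_eq : p^`().[z] = p.[z] * \sum_(r <- rs) (z - r)^-1.
  by rewrite {1}p_eq derivZ hornerZ horner_deriv_prod_XsubC // mulrA -hornerZ -p_eq.
have rs_neq_nil : rs != [::].
  by apply: contra dp_neq0 => /eqP rs_nil; rewrite dp_eq rs_nil big_nil mulr0.
have [r r_in le_r] := exists_normc_sum_le (fun r => (z - r)^-1) rs_neq_nil.
exists r; first exact: root_p.
have -> : (size p).-1 = size rs by rewrite p_eq size_scale // size_prod_XsubC.
have zr_gt0 : 0 < normc (z - r).
  by rewrite lt_def normc_ge0 normc_eq0 subr_eq0 andbT eq_sym; move/allP: rs_neq_z => ->.
have := ler_wpM2l (ltW zr_gt0) le_r.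
rewrite normcV mulrCA divff ?gt_eqF // mulr1 => le_m.
rewrite dp_eq normcM mulrCA mulrC.
by apply: ler_wpM2r; [exact: normc_ge0 | exact: le_m].
Qed.

End RootNearPoint.

Section UnitCircle.
Variable R : realType.
Implicit Types s t : R.

Definition expi t : R[i] := cos t +i* sin t.

Lemma expiD s t : expi (s + t) = expi s * expi t.
Proof. by rewrite /expi sinD cosD; simpc; congr (_ +i* _); ring. Qed.

Lemma expi0 : expi 0 = 1.
Proof. by rewrite /expi cos0 sin0. Qed.

Lemma expiMn t n : expi t ^+ n = expi (t *+ n).
Proof. by elim: n => [|n IHn]; rewrite ?expi0 // exprS IHn -expiD -mulrS. Qed.

Lemma expiDz t (k : int) : expi (t + pi *+ 2 *~ k) = expi t.
Proof.
have expiDn u m : expi (u + pi *+ 2 *+ m) = expi u.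
  by rewrite /expi (periodicn (@cosD2pi R)) (periodicn (@sinD2pi R)).
case: k => m; first exact: expiDn.
by rewrite NegzE mulrNz -[in RHS](subrK (pi *+ 2 *+ m.+1) t) expiDn.
Qed.

Lemma normc_expi t : normc (expi t) = 1.
Proof. by rewrite /= cos2Dsin2 sqrtr1. Qed.

Lemma abs_sin_le t : `|sin t| <= `|t|.
Proof.
wlog t_ge0 : t / 0 <= t.
  move=> le_sin; case: (leP 0 t) => [/le_sin//|/ltW]; rewrite -oppr_ge0 => /le_sin.
  by rewrite sinN !normrN.
have cont_sin : {within `[0, t], continuous (@sin R)}%classic.
  by apply/continuous_subspaceT => ?; exact: continuous_sin.
have [c _] := MVT_segment t_ge0 (fun u _ => is_derive_sin u) cont_sin.
by rewrite sin0 !subr0 => ->; rewrite normrM ler_piMl // cos_max.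
Qed.

Lemma normc_expiB1 t : normc (expi t - 1) <= `|t|.
Proof.
rewrite -(ler_pXn2r (n := 2)) ?nnegrE ?normc_ge0 // normc_sqr /=.
have -> : (cos t - 1) ^+ 2 + (sin t - 0) ^+ 2 = 4 * sin (t / 2) ^+ 2.
  have cos_half : cos t = 1 - 2 * sin (t / 2) ^+ 2.
    by rewrite {1}(splitr t) -mulr2n cos_mulr2n cos2sin2; ring.
  by rewrite subr0 sin2cos2 cos_half; ring.
have le_half := abs_sin_le (t / 2).
have half_sq : `|t / 2| ^+ 2 = `|t| ^+ 2 / 4 by rewrite !real_normK ?num_real //; field.
rewrite -[sin _ ^+ 2]real_normK ?num_real //.
have := normr_ge0 (sin (t / 2)); have := normr_ge0 (t / 2); nra.
Qed.

Lemma distc_expi s t : normc (expi s - expi t) <= `|s - t|.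
Proof.
rewrite -[s](subrK t) expiD -{2}[expi t]mul1r -mulrBl normcM normc_expi mulr1 addrK.
exact: normc_expiB1.
Qed.

Lemma polar (z : R[i]) : exists t, z = (normc z)%:C * expi t.
Proof.
have [->|z_neq0] := eqVneq z 0; first by exists 0; rewrite normc0 mul0r.
have r_gt0 : 0 < normc z by rewrite lt_def normc_eq0 z_neq0 normc_ge0.
have Re_le := normc_geRe z; have r_sqr := normc_sqr z.
move: r_gt0 Re_le r_sqr; case: z {z_neq0} => a b /=; set r := Num.sqrt _; clearbody r.
move=> r_gt0 a_le r_sqr; have r_neq0 : r != 0 by rewrite gt_eqF.
have c_itv : -1 <= a / r <= 1.
  by rewrite -ler_norml normrM normfV (gtr0_norm r_gt0) ler_pdivrMr // mul1r.
have sin_acos_c : sin (acos (a / r)) = `|b| / r.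
  have r2_neq0 : r ^+ 2 != 0 by rewrite expf_neq0.
  rewrite sin_acos // -[`|b| / r]ger0_norm ?divr_ge0 ?(ltW r_gt0) // -sqrtr_sqr.
  congr Num.sqrt; rewrite !expr_div_n real_normK ?num_real //.
  transitivity ((r ^+ 2 - a ^+ 2) / r ^+ 2); first by rewrite mulrBl divff.
  by rewrite {1}r_sqr addrAC subrr add0r.
have a_eq : a = r * cos (acos (a / r)).
  by rewrite acosK ?in_itv //= mulrC divfK.
exists (if 0 <= b then acos (a / r) else - acos (a / r)).
apply/eqP; rewrite eq_complex /=; case: ifP => b_ge0.
  by rewrite !mul0r subr0 addr0 -a_eq sin_acos_c mulrCA divff // mulr1 ger0_norm // !eqxx.
rewrite !mul0r subr0 addr0 cosN sinN -a_eq sin_acos_c mulrN mulrCA divff // mulr1.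
by rewrite ltr0_norm ?opprK ?eqxx // ltNge b_ge0.
Qed.

Lemma expi_root_near (psi th : R) n : (0 < n)%N ->
  exists phi, expi (phi *+ n) = expi psi /\ th <= phi <= th + pi *+ 2 / n%:R.
Proof.
move=> n_gt0; have n_pos : 0 < n%:R :> R by rewrite ltr0n.
have pi2_gt0 : 0 < pi *+ 2 :> R by rewrite mulrn_wgt0 // pi_gt0.
set x := (th *+ n - psi) / (pi *+ 2); set k := Num.ceil x.
exists ((psi + pi *+ 2 *~ k) / n%:R); split.
  by rewrite -[_ *+ n]mulr_natr divfK ?gt_eqF // expiDz.
have /andP[k_lt k_ge] := ceil_itv x.
rewrite rmorphB /= in k_lt; rewrite -mulrzr.
have x_eq : x * (pi *+ 2) = th * n%:R - psi by rewrite mulr_natr divfK ?gt_eqF.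
have /andP[k_lt' k_ge'] : (k%:~R - 1) * (pi *+ 2) <= x * (pi *+ 2) <= k%:~R * (pi *+ 2).
  by rewrite !ler_pM2r // k_ge ltW.
apply/andP; split; first by rewrite ler_pdivlMr //; lra.
by rewrite ler_pdivrMr // [X in _ <= X]mulrDl divfK ?gt_eqF //; lra.
Qed.

Lemma nth_root_near_expi (a : R[i]) (th : R) n : (0 < n)%N -> 0 < normc a <= 1 ->
  exists2 z, z ^+ n = a & normc (z - expi th) <= (pi *+ 2 - ln (normc a)) / n%:R.
Proof.
move=> n_gt0 /andP[a_gt0 a_le1]; have n_neq0 : n%:R != 0 :> R by rewrite pnatr_eq0 -lt0n.
have [psi a_eq] := polar a; have [phi [phi_root /andP[phi_ge phi_le]]] := expi_root_near psi th n_gt0.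
set rho := expR (ln (normc a) / n%:R).
exists (rho%:C * expi phi).
  rewrite exprMn -rmorphXn /= expiMn phi_root -expRM_natl mulrCA divff // mulr1.
  by rewrite lnK ?posrE.
have ln_le0 : ln (normc a) <= 0 := ln_le0 a_le1.
have rho_le1 : rho <= 1 by rewrite expR_le1 pmulr_lle0 // invr_gt0 ltr0n.
have rho_ge : 1 + ln (normc a) / n%:R <= rho := expR_ge1Dx _.
have -> : rho%:C * expi phi - expi th = (rho - 1)%:C * expi phi + (expi phi - expi th).
  by rewrite rmorphB /=; ring.
apply: le_trans (le_normcD _ _) _.
rewrite normcM normc_expi mulr1 normcR ler0_norm ?subr_le0 //.
have := distc_expi phi th; rewrite ger0_norm ?subr_ge0 //.
rewrite mulrBl; lra.
Qed.

End UnitCircle.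

Section PnFacts.
Variable R : realType.
Implicit Types (n : nat) (x q : R[i]).

Lemma hornerPn n x : (Pn R n).[x] = (x ^+ 2 - x - 1) * x ^+ n + 1.
Proof. by rewrite /Pn !hornerE. Qed.

Lemma horner_derivPn n x :
  x * (Pn R n)^`().[x] = ((2 * x - 1) * x + n%:R * (x ^+ 2 - x - 1)) * x ^+ n.
Proof.
rewrite /Pn derivD derivM !derivB !derivXn derivX -[1]/(1%:P : {poly R[i]}) derivC.
rewrite !hornerE hornerMn hornerXn.
case: n => [|n]; first by rewrite mulr0n expr0; ring.
by rewrite -mulr_natr [x ^+ n.+1]exprS; ring.
Qed.

Lemma size_Pn_le n : ((size (Pn R n)).-1 <= n + 2)%N.
Proof.
set q : {poly R[i]} := 'X^2 - 'X - 1.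
have size_q : (size q <= 3)%N.
  rewrite (leq_trans (size_polyD _ _)) // geq_max size_polyN size_poly1 andbT.
  by rewrite (leq_trans (size_polyD _ _)) // geq_max size_polyN size_polyX size_polyXn.
have size_qX : (size (q * 'X^n)%R <= n + 3)%N.
  by rewrite (leq_trans (size_polyMleq _ _)) // size_polyXn addnS /= addnC leq_add2l.
suff : (size (q * 'X^n + 1)%R <= n + 3)%N by case: size => //= k; rewrite addn3 ltnS addn2.
by rewrite (leq_trans (size_polyD _ _)) // geq_max size_qX size_poly1 addn3.
Qed.

Lemma small_roots_conj n q : small_roots n q -> small_roots n q^*.
Proof.
case=> /rootP root_q q_lt1; split; last by rewrite normcJ.
apply/rootP; move: root_q; rewrite !hornerPn => root_q.
by rewrite -conjc0 -root_q rmorphD rmorphM !rmorphB !rmorphXn !rmorph1.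
Qed.

Lemma normc_derivPn_factor_ge n x : normc x <= 1 -> 1 <= normc (x ^+ 2 - x - 1) ->
  n%:R - 3 <= normc ((2 * x - 1) * x + n%:R * (x ^+ 2 - x - 1)).
Proof.
move=> x_le1 quad_ge1.
have lin_le : normc ((2 * x - 1) * x) <= 3.
  rewrite normcM (le_trans (ler_wpM2l (normc_ge0 _) x_le1)) // mulr1.
  rewrite (le_trans (le_normcD _ _)) // normcN normc1 normcM normc_nat; lra.
have := lerB_distc (n%:R * (x ^+ 2 - x - 1)) (- ((2 * x - 1) * x)).
rewrite opprK normcN [_ + (2 * x - 1) * x]addrC [normc (n%:R * _)]normcM normc_nat.
have := ler_wpM2l (ler0n R n) quad_ge1; lra.
Qed.

End PnFacts.

Section RootsNearUnitCircle.
Variables (R : realType) (th : R).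
Hypotheses (th_gt0 : 0 < th) (th_ltpi : th < pi).

Let w := expi th.
Let A := w ^+ 2 - w - 1.

Lemma quad_expansion (x : R[i]) : x ^+ 2 - x - 1 = A + (x - w) * (x + w - 1).
Proof. by rewrite /A; ring. Qed.

Lemma normc_A_gt1 : 1 < normc A.
Proof.
have A_eq : A = w * ((-1) +i* (2 * sin th)).
  have cs := cos2Dsin2 th.
  rewrite /A /w /expi; simpc; congr (_ +i* _); last by ring.
  by rewrite -[X in _ - X = _]cs; ring.
have s_gt0 : 0 < sin th by apply: sin_gt0_pi; rewrite th_gt0.
by rewrite A_eq normcM normc_expi mul1r /= -[X in X < _]sqrtr1 ltr_sqrt; nra.
Qed.

Lemma normc_addw1_le (x : R[i]) : normc (x + w - 1) <= normc (x - w) + 3.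
Proof.
have -> : x + w - 1 = (x - w) + (w + w - 1) by ring.
rewrite (le_trans (le_normcD _ _)) // lerD2l (le_trans (le_normcD _ _)) // normcN normc1.
by rewrite (le_trans (lerD (le_normcD _ _) (lexx _))) // normc_expi; lra.
Qed.

Lemma normc_quad_gt1 (x : R[i]) : normc (x - w) <= 1 ->
  8 * normc (x - w) <= normc A - 1 -> 1 < normc (x ^+ 2 - x - 1).
Proof.
move=> near1 nearA; have := lerB_distc A (- ((x - w) * (x + w - 1))).
rewrite opprK -quad_expansion normcN normcM.
have := ler_wpM2l (normc_ge0 (x - w)) (normc_addw1_le x).
have := normc_A_gt1; have := normc_ge0 (x - w); nra.
Qed.

Lemma small_root_near n q : root (Pn R n) q -> normc (q - w) <= 1 ->
  8 * normc (q - w) <= normc A - 1 -> normc q < 1.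
Proof.
move=> /rootP; rewrite hornerPn => root_q near1 nearA; rewrite ltNge; apply/negP => q_ge1.
have quad_gt1 := normc_quad_gt1 near1 nearA.
have : normc (q ^+ 2 - q - 1) * normc q ^+ n = 1.
  by rewrite -normcX -normcM -[_ * q ^+ n](addrK 1) root_q sub0r normcN normc1.
have := exprn_ege1 n q_ge1; nra.
Qed.

Lemma exists_Pn_root_near n z : (4 <= n)%N -> z ^+ n * A = -1 ->
  normc z <= 1 -> normc (z - w) <= 1 -> 8 * normc (z - w) <= normc A - 1 ->
  exists2 q, root (Pn R n) q & normc (z - q) <= 24 * normc (z - w).
Proof.
move=> n_ge4 zA z_le1 near1 nearA; set d := normc (z - w) in near1 nearA *.
have d_ge0 : 0 <= d := normc_ge0 _.
have zn_neq0 : z ^+ n != 0.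
  by apply/eqP => zn0; move: zA; rewrite zn0 mul0r => /esym/eqP; rewrite oppr_eq0 oner_eq0.
set u := normc (z ^+ n); have u_gt0 : 0 < u by rewrite lt_def normc_eq0 zn_neq0 normc_ge0.
have P_le : normc (Pn R n).[z] <= u * (4 * d).
  have -> : (Pn R n).[z] = z ^+ n * ((z - w) * (z + w - 1)).
    by rewrite hornerPn quad_expansion mulrDl [A * _]mulrC zA; ring.
  rewrite normcM ler_pM2l // normcM.
  by have := normc_addw1_le z; rewrite -/d; nra.
have dP_ge : u * (n%:R - 3) <= normc (Pn R n)^`().[z].
  have : normc (z * (Pn R n)^`().[z]) <= normc (Pn R n)^`().[z].
    by rewrite normcM ler_piMl ?normc_ge0.
  apply: le_trans; rewrite horner_derivPn normcM [X in _ <= X]mulrC ler_pM2l //.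
  by apply: normc_derivPn_factor_ge => //; apply: ltW; exact: normc_quad_gt1.
have n_ge4' : 4 <= n%:R :> R by rewrite (ler_nat R 4 n).
have dP_neq0 : (Pn R n)^`().[z] != 0.
  by rewrite -normc_eq0 gt_eqF // (lt_le_trans _ dP_ge) // mulr_gt0 // subr_gt0; lra.
have [q root_q le_q] := exists_root_dist_le dP_neq0; exists q => //.
have size_le : ((size (Pn R n)).-1)%:R <= n%:R + 2 :> R.
  by rewrite -[2]/(2%:R) -natrD ler_nat size_Pn_le.
have D_ge0 := normc_ge0 (z - q).
have le_D : normc (z - q) * (u * (n%:R - 3)) <= (n%:R + 2) * (u * (4 * d)).
  apply: le_trans (ler_wpM2l D_ge0 dP_ge) (le_trans le_q _).
  exact: ler_pM (ler0n _ _) (normc_ge0 _) size_le P_le.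
rewrite mulrCA [X in _ <= X]mulrCA ler_pM2l // in le_D.
nra.
Qed.

Lemma eventually_small_root_near (dl : R) : 0 < dl ->
  exists N, forall n, (N < n)%N -> exists q, small_roots n q /\ normc (q - w) < dl.
Proof.
move=> dl_gt0; have A_gt1 := normc_A_gt1; have A_gt0 : 0 < normc A := lt_trans ltr01 A_gt1.
set m := Num.min dl (Num.min 1 ((normc A - 1) / 8)).
have m_gt0 : 0 < m by rewrite !lt_min dl_gt0 ltr01 divr_gt0 // subr_gt0.
have [m_le_dl m_le1 m_leA] : [/\ m <= dl, m <= 1 & m <= (normc A - 1) / 8].
  by rewrite /m !ge_min !lexx !orbT.
set C := pi *+ 2 + ln (normc A).
exists (maxn 4 (Num.truncn (25 * C / m))) => n; rewrite gtn_max => /andP[n_gt4 n_gtC].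
have n_gt0 : (0 < n)%N by apply: leq_trans n_gt4.
have n_pos : 0 < n%:R :> R by rewrite ltr0n.
have normc_a : normc (- A^-1) = (normc A)^-1 by rewrite normcN normcV.
have a_le1 : (normc A)^-1 <= 1 by rewrite invf_le1 // ltW.
have [z zn dz] : exists2 z, z ^+ n = - A^-1 & normc (z - w) <= C / n%:R.
  rewrite /C -[ln _]opprK -lnV ?posrE // -normc_a.
  by apply: nth_root_near_expi => //; rewrite normc_a invr_gt0 A_gt0.
have d_small : 25 * normc (z - w) < m.
  have := ltr_nat_gt_truncn n_gtC; rewrite ltr_pdivrMr // => lt_C.
  move: dz; rewrite ler_pdivlMr // => dz.
  have := normc_ge0 (z - w); nra.
have zA : z ^+ n * A = -1 by rewrite zn mulNr mulVf // -normc_eq0 gt_eqF.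
have z_le1 : normc z <= 1 by rewrite -(expr_le1 n_gt0) ?normc_ge0 // -normcX zn normc_a.
have near1 : normc (z - w) <= 1 by lra.
have nearA : 8 * normc (z - w) <= normc A - 1 by have := normc_ge0 (z - w); lra.
have [q root_q le_q] := exists_Pn_root_near (ltnW n_gt4) zA z_le1 near1 nearA.
have q_near : normc (q - w) <= 25 * normc (z - w).
  have -> : q - w = (z - w) - (z - q) by ring.
  by rewrite (le_trans (le_normcD _ _)) // normcN; lra.
have d_ge0 := normc_ge0 (z - w).
exists q; split; last by lra.
split => //; rewrite normr_normc ltcR.
by apply: small_root_near root_q _ _; lra.
Qed.

End RootsNearUnitCircle.

Section ConvexHullConjClosed.
Variables (R : realType) (S : R[i] -> Prop).
Hypothesis S_conj : forall q, S q -> S q^*.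

Lemma convex_hull_quad (q1 q2 z : R[i]) : S q1 -> S q2 ->
  complex.Re q2 <= complex.Re z <= complex.Re q1 ->
  `|complex.Im z| <= complex.Im q1 -> `|complex.Im z| <= complex.Im q2 ->
  convex_hull S z.
Proof.
case: q1 q2 z => [u1 v1] [u2 v2] [x y] /= S1 S2 /andP[u2_le le_u1] y_le1 y_le2.
(* When [u1 = u2] (resp. [h = 0]) the divisions below yield [0], which still works. *)
set lam := (x - u2) / (u1 - u2).
have [lam_ge0 lam_le1 lam_Re] : [/\ 0 <= lam, lam <= 1 & lam * u1 + (1 - lam) * u2 = x].
  have [u_eq | u_neq] := eqVneq u1 u2.
    rewrite /lam u_eq subrr invr0 mulr0 mul0r subr0 mul1r add0r lexx ler01.
    by split => //; apply/le_anti; rewrite u2_le -u_eq le_u1.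
  have u_gt : 0 < u1 - u2 by rewrite subr_gt0 lt_neqAle eq_sym u_neq (le_trans u2_le le_u1).
  split.
  - by apply: divr_ge0; rewrite subr_ge0 // (le_trans u2_le le_u1).
  - by rewrite /lam ler_pdivrMr // mul1r lerD2r.
  - by rewrite /lam; field; rewrite subr_eq0.
set h := lam * v1 + (1 - lam) * v2.
have y_le : `|y| <= h.
  rewrite -[`|y|]mul1r -[1](subrK lam) mulrDl addrC.
  by rewrite lerD // ler_wpM2l // subr_ge0.
set sg := y / h.
have [sg_le1 sg_h] : `|sg| <= 1 /\ sg * h = y.
  have [h0 | h_neq0] := eqVneq h 0.
    have y0 : y = 0 by apply/eqP; rewrite -normr_le0 -h0.
    by rewrite /sg y0 mul0r normr0 ler01 mul0r.
  have h_gt0 : 0 < h by rewrite lt_def h_neq0 (le_trans (normr_ge0 _) y_le).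
  by rewrite /sg normrM normfV (gtr0_norm h_gt0) ler_pdivrMr // mul1r divfK.
have /andP[sgN sgP] : -1 <= sg <= 1 by rewrite -ler_norml.
pose W := [:: lam * (1 + sg) / 2; lam * (1 - sg) / 2;
              (1 - lam) * (1 + sg) / 2; (1 - lam) * (1 - sg) / 2].
pose Q := [:: u1 +i* v1; (u1 +i* v1)^*; u2 +i* v2; (u2 +i* v2)^*].
exists 4%N, (fun i : 'I_4 => Q`_i), (fun i : 'I_4 => W`_i).
split; [|split; [|split]].
- by case=> [[|[|[|[|i]]]] Hi] //; [exact: S_conj S1 | exact: S_conj S2].
- case=> [[|[|[|[|i]]]] Hi] //=; apply: divr_ge0 => //; apply: mulr_ge0; lra.
- by rewrite !big_ord_recl big_ord0 /=; field.
- rewrite !big_ord_recl big_ord0 /=; simpc; congr (_ +i* _).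
    by rewrite -lam_Re; field.
  by rewrite -sg_h /h; field.
Qed.

Lemma convex_hull_disk (f : nat -> R[i]) K (rho r delta : R) : (0 < K)%N -> 0 <= r ->
  (forall j, (j <= K)%N -> S (f j) /\ r <= normc (f j) <= 1) ->
  (forall j, (j < K)%N -> complex.Re (f j) <= complex.Re (f j.+1) + delta) ->
  rho <= complex.Re (f 0%N) -> complex.Re (f K) <= - rho ->
  rho ^+ 2 + 2 * delta <= r ^+ 2 ->
  forall z, normc z <= rho -> convex_hull S z.
Proof.
move=> K_gt0 r_ge0 f_ok f_step f0_ge fK_le gap z z_le.
have /andP[Re_z_ge Re_z_le] : - rho <= complex.Re z <= rho.
  by rewrite -ler_norml (le_trans (normc_geRe z)).
have [k k_lt /andP[k1_le le_k]] :=
  nat_ivt (u := fun j => complex.Re (f j)) K_gt0 (le_trans Re_z_le f0_ge) (le_trans fK_le Re_z_ge).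
have step_k := f_step k k_lt.
have rho_le1 : rho <= 1.
  have [_ /andP[_ f0_le1]] := f_ok 0%N isT.
  by rewrite (le_trans f0_ge) // (le_trans (ler_norm _)) // (le_trans (normc_geRe _)).
pose g j := if 0 <= complex.Im (f j) then f j else (f j)^*.
have g_ok j : (j <= K)%N -> [/\ S (g j), complex.Re (g j) = complex.Re (f j)
    & complex.Im (g j) = `|complex.Im (f j)|].
  move=> /f_ok[Sf _]; rewrite /g; case: ifP => [Im_ge0 | /negbT Im_lt0].
    by rewrite ger0_norm.
  split; [exact: S_conj | by case: (f j) |].
  by rewrite ltr0_norm ?ltNge //; case: (f j).
have Im_le j : (j <= K)%N -> `|complex.Re (f j) - complex.Re z| <= delta ->
    `|complex.Im z| <= complex.Im (g j).
  move=> le_jK near_Re; have [_ _ ->] := g_ok j le_jK.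
  have [_ /andP[r_le le1]] := f_ok j le_jK.
  have nz_ge0 := normc_ge0 z.
  apply: (abs_Im_le _ _ near_Re) => //; first exact: le_trans z_le rho_le1.
  have := ler_pM nz_ge0 nz_ge0 z_le z_le; have := ler_pM r_ge0 r_ge0 r_le r_le.
  by rewrite !expr2 in gap *; lra.
have [[S_k Re_k _] [S_k1 Re_k1 _]] := (g_ok k (ltnW k_lt), g_ok k.+1 k_lt).
apply: (convex_hull_quad S_k S_k1); first by rewrite Re_k Re_k1 k1_le le_k.
  by apply: Im_le; [exact: ltnW | rewrite ger0_norm ?subr_ge0 //; lra].
by apply: Im_le => //; rewrite distrC ger0_norm ?subr_ge0 //; lra.
Qed.

End ConvexHullConjClosed.

Lemma Cn_sub_unit_disk (R : realType) n (z : R[i]) : Cn n z -> normc z <= 1.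
Proof.
case=> k [q [c [small_q [c_ge0 [c_sum1 ->]]]]].
rewrite (le_trans (normc_sum _ _)) // -c_sum1 ler_sum // => i _.
rewrite normcM normcR ger0_norm // ler_piMr //.
by case: (small_q i) => _; rewrite normr_normc ltcR => /ltW.
Qed.

Lemma cos_grid (R : realType) (eps : R) : 0 < eps -> eps <= 1 ->
  exists K (th : nat -> R), [/\ (0 < K)%N, forall j, (j <= K)%N -> 0 < th j < pi,
    1 - eps / 2 <= cos (th 0%N), cos (th K) <= - (1 - eps / 2) &
    forall j, (j < K)%N -> cos (th j) - cos (th j.+1) <= eps / 8].
Proof.
move=> eps_gt0 eps_le1; set c0 := 1 - eps / 2.
have [c0_gt0 c0_lt1] : 0 < c0 /\ c0 < 1 by rewrite /c0; split; lra.
set K := (Num.truncn (16 / eps)).+1; have K_pos : 0 < K%:R :> R by rewrite ltr0n.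
set eta := 2 * c0 / K%:R; have eta_ge0 : 0 <= eta by rewrite divr_ge0 ?ltW // mulr_gt0.
have K_eta : K%:R * eta = 2 * c0 by rewrite mulrC divfK ?gt_eqF.
have eta_le : eta <= eps / 8.
  have := ltr_nat_gt_truncn (ltnSn (Num.truncn (16 / eps))).
  by rewrite -/K ltr_pdivrMr // => K_gt; nra.
pose c j := c0 - j%:R * eta.
have cos_acos_c j : (j <= K)%N -> [/\ 0 < acos (c j), acos (c j) < pi & cos (acos (c j)) = c j].
  move=> le_jK; have : j%:R * eta <= K%:R * eta by rewrite ler_wpM2r // ler_nat.
  have := mulr_ge0 (ler0n R j) eta_ge0; rewrite -/(c j) => jeta_ge0 jeta_le.
  have c_in : c j \in `[-1, 1] by rewrite in_itv /= /c; apply/andP; split; lra.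
  by split; [apply: acos_gt0 | apply: acos_ltpi | exact: acosK]; rewrite /c; lra.
exists K, (fun j => acos (c j)); split => //.
- by move=> j /cos_acos_c[-> ->].
- by have [_ _ ->] := cos_acos_c 0%N isT; rewrite /c mul0r subr0.
- by have [_ _ ->] := cos_acos_c K (leqnn K); rewrite /c K_eta; lra.
- move=> j lt_jK; have [_ _ ->] := cos_acos_c j (ltnW lt_jK).
  by have [_ _ ->] := cos_acos_c j.+1 lt_jK; rewrite /c -addn1 natrD; lra.
Qed.

Lemma disk_sub_Cn (R : realType) (eps : R) : 0 < eps -> eps <= 1 ->
  exists N, forall n, (N < n)%N -> forall z : R[i], normc z <= 1 - eps -> Cn n z.
Proof.
move=> eps_gt0 eps_le1; set dl := eps / 8; have dl_gt0 : 0 < dl by rewrite divr_gt0.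
have [K [th [K_gt0 th_itv cos_th0 cos_thK cos_step]]] := cos_grid eps_gt0 eps_le1.
have ev_root j : (j <= K)%N -> exists N, forall n, (N < n)%N ->
    exists q, small_roots n q /\ normc (q - expi (th j)) < dl.
  by move=> /th_itv/andP[th_gt0 th_lt]; exact: eventually_small_root_near.
have [N HN] := eventually_finite_choice ev_root.
exists N => n n_gt z z_le; have [f f_ok] := HN n n_gt.
have Re_near j : (j <= K)%N -> `|complex.Re (f j) - cos (th j)| < dl.
  by move=> /f_ok[_ near]; exact: le_lt_trans (distRe_le_distc _ _) near.
apply: (convex_hull_disk (@small_roots_conj R n) (f := f) (K := K) (r := 1 - dl)
  (delta := eps / 8 + 2 * dl) _ _ _ _ _ _ _ z_le) => //.
- by rewrite /dl; lra.
- move=> j le_jK; have [small_fj near] := f_ok j le_jK; split => //.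
  have := small_fj.2; rewrite normr_normc ltcR => /ltW ->; rewrite andbT.
  by have := le_normcD (expi (th j) - f j) (f j); rewrite subrK normc_expi distcC; lra.
- move=> j lt_jK; have := cos_step j lt_jK.
  have := Re_near j (ltnW lt_jK); have := Re_near j.+1 lt_jK.
  by rewrite !ltr_norml => /andP[? ?] /andP[? ?]; lra.
- by have := Re_near 0%N isT; rewrite ltr_norml /dl => /andP[? ?]; lra.
- by have := Re_near K (leqnn K); rewrite ltr_norml /dl => /andP[? ?]; lra.
- by rewrite /dl; nra.
Qed.

Theorem theorem4p3 (R : realType) (eps : R) :
  0 < eps ->
  exists N : nat, forall n : nat, (N < n)%N ->
    (forall z : R[i], cdisk (1 - eps) z -> Cn n z) /\
    (forall z : R[i], Cn n z -> cdisk 1 z).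
Proof.
move=> eps_gt0; rewrite /cdisk.
have upper n z : Cn n z -> `|z| <= 1%:C by rewrite normr_normc lecR; exact: Cn_sub_unit_disk.
have [eps_le1 | eps_gt1] := leP eps 1.
  have [N lower] := disk_sub_Cn eps_gt0 eps_le1.
  by exists N => n /lower{}lower; split => [z|]; [rewrite normr_normc lecR; exact: lower | exact: upper].
exists 0%N => n _; split => [z|]; last exact: upper.
by rewrite normr_normc lecR => z_le; have := normc_ge0 z; lra.
Qed.
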